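(* Let $X$ be a CAT(0) space, $T_n:X\to X$ for $n\in\mathbb{N}$, and $(\gamma_n)$ a sequence of positive reals such that $(T_n)$ is jointly $(P_2)$ with respect to $(\gamma_n)$. Let $x\in X$, $x_0:=x$ and $x_{n+1}:=T_nx_n$ for all $n\in\mathbb{N}$. Then the sequence $\left(\frac{d(x_n,x_{n+1})}{\gamma_n}\right)_{n\in\mathbb{N}}$ is nonincreasing.
   Context: A geodesic space $(X,d)$ is CAT(0) if for all $z\in X$, all geodesics $\gamma:[a,b]\to X$ and all $t\in[0,1]$, $d^2(z,\gamma((1-t)a+tb))\le(1-t)d^2(z,\gamma(a))+td^2(z,\gamma(b))-t(1-t)d^2(\gamma(a),\gamma(b))$. The family $(T_n)$ is jointly $(P_2)$ with respect to $(\gamma_n)$ if for all $n,m\in\mathbb{N}$ and $x,y\in X$, $\frac1{\gamma_m}\big(d^2(T_nx,T_my)+d^2(y,T_my)-d^2(y,T_nx)\big)\le\frac1{\gamma_n}\big(d^2(x,T_my)-d^2(x,T_nx)-d^2(T_nx,T_my)\big)$. *)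

From Stdlib Require Import Reals.
Open Scope R_scope.

Definition is_metric {X : Type} (d : X -> X -> R) : Prop :=
  (forall x y, 0 <= d x y) /\
  (forall x y, d x y = 0 <-> x = y) /\
  (forall x y, d x y = d y x) /\
  (forall x y z, d x z <= d x y + d y z).

(* gamma : [a,b] -> X is a geodesic (isometric embedding of [a,b]);
   gamma is given as a total function R -> X, only its values on [a,b] matter. *)
Definition is_geodesic {X : Type} (d : X -> X -> R) (g : R -> X) (a b : R) : Prop :=
  a <= b /\
  forall s t, a <= s <= b -> a <= t <= b -> d (g s) (g t) = Rabs (s - t).

Definition geodesic_space {X : Type} (d : X -> X -> R) : Prop :=
  is_metric d /\
  forall x y, exists (g : R -> X) (a b : R),
    is_geodesic d g a b /\ g a = x /\ g b = y.

Definition CAT0 {X : Type} (d : X -> X -> R) : Prop :=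
  geodesic_space d /\
  forall (z : X) (g : R -> X) (a b t : R),
    is_geodesic d g a b -> 0 <= t <= 1 ->
    (d z (g ((1 - t) * a + t * b)))^2 <=
      (1 - t) * (d z (g a))^2 + t * (d z (g b))^2
      - t * (1 - t) * (d (g a) (g b))^2.

Definition jointly_P2 {X : Type} (d : X -> X -> R)
    (T : nat -> X -> X) (gam : nat -> R) : Prop :=
  forall (n m : nat) (x y : X),
    / gam m * ((d (T n x) (T m y))^2 + (d y (T m y))^2 - (d y (T n x))^2)
    <= / gam n * ((d x (T m y))^2 - (d x (T n x))^2 - (d (T n x) (T m y))^2).

(* Apply the joint (P_2) inequality with m = n + 1 at the points x_n and
   x_(n+1).  Its left side becomes 2 d(x_(n+1),x_(n+2))^2 / gamma_(n+1), and by
   the triangle inequality its right side is at most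
   2 d(x_n,x_(n+1)) d(x_(n+1),x_(n+2)) / gamma_n; cancelling one factor
   d(x_(n+1),x_(n+2)) gives the claim. *)

From Stdlib Require Import Reals Lra Psatz.
Open Scope R_scope.

Lemma metric_sqr_triangle {X : Type} (d : X -> X -> R) (x y z : X) :
  is_metric d ->
  (d x z)^2 - (d x y)^2 - (d y z)^2 <= 2 * (d x y * d y z).
Proof.
  intros [Hpos [_ [_ Htri]]].
  pose proof (Hpos x y); pose proof (Hpos y z); pose proof (Hpos x z).
  pose proof (Htri x y z).
  nra.
Qed.

Lemma jointly_P2_successive_step {X : Type} (d : X -> X -> R)
    (T : nat -> X -> X) (gam : nat -> R) (n m : nat) (x : X) :
  is_metric d -> jointly_P2 d T gam -> 0 < gam n ->
  let y := T n x in
  / gam m * (d y (T m y))^2 <= / gam n * (d x y * d y (T m y)).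
Proof.
  intros Hd HP Hgn y.
  pose proof (HP n m x y) as HP2; fold y in HP2.
  assert (Hyy : d y y = 0) by (apply (proj1 (proj2 Hd)); reflexivity).
  rewrite Hyy in HP2.
  pose proof (metric_sqr_triangle d x y (T m y) Hd) as Htri.
  assert (0 < / gam n) by (apply Rinv_0_lt_compat; exact Hgn).
  nra.
Qed.

Lemma Rdiv_le_of_sqr_le (a b g g' : R) :
  0 <= a -> 0 <= b -> 0 < g ->
  / g' * b^2 <= / g * (a * b) -> b / g' <= a / g.
Proof.
  intros Ha Hb Hg H.
  unfold Rdiv.
  destruct (Req_dec b 0) as [->|Hb0].
  - rewrite Rmult_0_l.
    apply Rmult_le_pos; [exact Ha | left; apply Rinv_0_lt_compat; exact Hg].
  - apply Rmult_le_reg_r with b; [lra | nra].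
Qed.

Theorem proposition3p12 (X : Type) (d : X -> X -> R) (T : nat -> X -> X)
    (gam : nat -> R) (x : X) (xs : nat -> X) :
  CAT0 d ->
  (forall n, 0 < gam n) ->
  jointly_P2 d T gam ->
  xs 0%nat = x ->
  (forall n, xs (S n) = T n (xs n)) ->
  forall n, d (xs (S n)) (xs (S (S n))) / gam (S n) <= d (xs n) (xs (S n)) / gam n.
Proof.
  intros [[Hd _] _] Hg HP _ Hxs n.
  pose proof (jointly_P2_successive_step d T gam n (S n) (xs n) Hd HP (Hg n))
    as Hstep; cbv zeta in Hstep.
  rewrite <- !Hxs in Hstep.
  apply Rdiv_le_of_sqr_le; [apply (proj1 Hd) | apply (proj1 Hd) | apply Hg | exact Hstep].
Qed.
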